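(* Let $S$ be an additively cancellative semiring with $1\neq 0$ and let $n\geq 2$. Then neither the semiring $M_n(S)$ of all $n\times n$ matrices over $S$ nor the semiring $T_n(S)$ of all upper triangular $n\times n$ matrices over $S$ is centrally essential.
   Context: A semiring is a set $S$ with two binary operations $+$ and $\cdot$ such that $(S,+)$ is a commutative monoid with neutral element $0$, $(S,\cdot)$ is a monoid with identity $1$, multiplication distributes over addition on both sides, and $0s=s0=0$ for all $s\in S$. $M_n(S)$ and $T_n(S)$ carry the usual matrix addition and multiplication. The center is $C(R)=\{r\in R: rr'=r'r \text{ for all } r'\in R\}$. A semiring $R$ is centrally essential if for every non-zero $x\in R$ there exist non-zero $y,z\in C(R)$ with $xy=z$. $S$ is additively cancellative if $x+z=y+z$ implies $x=y$. *)

From HB Require Import structures.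
From mathcomp Require Import all_boot all_order all_algebra.
Set Implicit Arguments. Unset Strict Implicit. Unset Printing Implicit Defensive.
Import GRing.Theory.
Local Open Scope ring_scope.

(* Centrally essential, for the subsemiring of R carved out by a predicate P
   (closed under the semiring operations, with the operations of R). *)
Definition center_in (R : pzSemiRingType) (P : pred R) (c : R) : Prop :=
  P c /\ forall r, P r -> c * r = r * c.

Definition centrally_essential_in (R : pzSemiRingType) (P : pred R) : Prop :=
  forall x, P x -> x != 0 ->
    exists y z, [/\ center_in P y, center_in P z, y != 0, z != 0 & x * y = z].

Definition centrally_essential (R : pzSemiRingType) : Prop :=
  centrally_essential_in (@predT R).

Definition add_cancellative (S : pzSemiRingType) : Prop :=
  forall x y z : S, x + z = y + z -> x = y.

Definition upper_triangular (S : pzSemiRingType) (n : nat) : pred 'M[S]_n :=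
  fun A => [forall i : 'I_n, forall j : 'I_n, (j < i)%N ==> (A i j == 0)].

(* Let o <> l.  An element y commuting with every diagonal unit E_kk and with
   every unit E_oj of the first row is a scalar matrix c I.  If such a y
   multiplies the matrix unit x = E_ol into a central z, then z = c E_ol, and
   z commuting with E_ll forces c = 0, i.e. y = 0.  All these units are upper
   triangular when o is the first index, so the argument covers both M_n(S) and
   T_n(S). *)

From mathcomp Require Import all_boot all_order all_algebra.
Set Implicit Arguments. Unset Strict Implicit. Unset Printing Implicit Defensive.
Local Open Scope ring_scope.
Import GRing.Theory.

Section MatrixUnits.

Variable S : pzSemiRingType.

Lemma mul_mx_deltaE m n p (A : 'M[S]_(m, n)) i j k l :
  (A *m delta_mx i j : 'M_(m, p)) k l = if l == j then A k i else 0.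
Proof.
rewrite mxE (bigD1 i) //= mxE eqxx /= big1 ?addr0.
  by case: (l == j); rewrite ?mulr1 ?mulr0.
by move=> t /negPf neq_ti; rewrite mxE neq_ti mulr0.
Qed.

Lemma mul_delta_mxE m n p (A : 'M[S]_(n, p)) i j k l :
  (delta_mx i j *m A : 'M_(m, p)) k l = if k == i then A j l else 0.
Proof.
rewrite mxE (bigD1 j) //= mxE eqxx andbT big1 ?addr0.
  by case: (k == i); rewrite ?mul1r ?mul0r.
by move=> t /negPf neq_tj; rewrite mxE neq_tj andbF mul0r.
Qed.

Lemma delta_mx_neq0 m n (i : 'I_m) (j : 'I_n) :
  (1 : S) != 0 -> delta_mx i j != 0 :> 'M[S]_(m, n).
Proof.
move=> one_neq0; apply: contra one_neq0 => /eqP/matrixP/(_ i j).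
by rewrite !mxE !eqxx => /eqP.
Qed.

Lemma upper_triangular_delta_mx n (i j : 'I_n) :
  (i <= j)%N -> upper_triangular (delta_mx i j : 'M[S]_n).
Proof.
move=> le_ij; apply/forallP => a; apply/forallP => b; apply/implyP => lt_ba.
rewrite mxE; case: (eqVneq a i) => [eq_ai|] //=; case: (eqVneq b j) => //= eq_bj.
by move: lt_ba; rewrite eq_ai eq_bj ltnNge le_ij.
Qed.

Variables (n : nat) (A : 'M[S]_n).

Lemma commute_delta_diag_offdiag0 i k :
  A * delta_mx k k = delta_mx k k * A -> i != k -> A i k = 0.
Proof.
move=> /(congr1 (fun M : 'M_n => M i k)) /=.
by rewrite -!mulmxE mul_mx_deltaE mul_delta_mxE eqxx => -> /negPf ->.
Qed.

Lemma commute_delta_diag_eq o j :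
  A * delta_mx o j = delta_mx o j * A -> A j j = A o o.
Proof.
move=> /(congr1 (fun M : 'M_n => M o j)) /=.
by rewrite -!mulmxE mul_mx_deltaE mul_delta_mxE !eqxx.
Qed.

End MatrixUnits.

Lemma matrix_units_not_centrally_essential (S : pzSemiRingType) n
    (P : pred 'M[S]_n) (o l : 'I_n) :
  (1 : S) != 0 -> o != l ->
  (forall k, P (delta_mx k k)) -> (forall j, P (delta_mx o j)) ->
  ~ centrally_essential_in P.
Proof.
move=> one_neq0 neq_ol P_diag P_row ce.
have [y [z [[_ cy] [_ cz] y_neq0 _ def_z]]] :=
  ce _ (P_row l) (delta_mx_neq0 o l one_neq0).
have y_diag j : y j j = y o o by apply/commute_delta_diag_eq/cy.
have yll0 : y l l = 0.
  have := congr1 (fun M : 'M_n => M o l) (cz _ (P_diag l)).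
  rewrite /= -!mulmxE mul_mx_deltaE mul_delta_mxE eqxx (negPf neq_ol) -def_z.
  by rewrite -mulmxE mul_delta_mxE eqxx.
apply/(negP y_neq0)/eqP/matrixP => i k; rewrite mxE.
have [<-|neq_ik] := eqVneq i k; last exact/(commute_delta_diag_offdiag0 (cy _ _)).
by rewrite y_diag -(y_diag l).
Qed.

Theorem corollary2p4 (S : pzSemiRingType) (n : nat) :
  add_cancellative S -> (1 : S) != 0 -> (2 <= n)%N ->
  ~ @centrally_essential 'M[S]_n /\
  ~ centrally_essential_in (@upper_triangular S n).
Proof.
move=> _ one_neq0; case: n => [|[|m]] // _.
have neq_0max : (ord0 : 'I_m.+2) != ord_max by [].
split; apply: (matrix_units_not_centrally_essential one_neq0 neq_0max) => //.
- by move=> k; apply: upper_triangular_delta_mx.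
- by move=> j; apply: upper_triangular_delta_mx.
Qed.
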